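(* Let $\mathcal{E}=[\theta,u]$ be an interval effect algebra that generates its ordered linear space, has an order-determining set of states, and is unrestricted. Let $\mathcal{I}$ be an operation from $\mathcal{E}$ to $\mathcal{E}$ and $a\in\mathcal{E}$ with $\mathcal{I}^*(u)=a$. Then the following are equivalent: (i) $a$ is $\mathcal{I}$-repeatable, i.e. $\mathcal{I}^*(a)=a$; (ii) $a[\mathcal{I}]a=a$; (iii) $a[\mathcal{I}]a'=\theta$; (iv) $a[\mathcal{I}]b=\theta$ for every $b\in\mathcal{E}$ with $a\perp b$; (v) $\mathcal{I}^*(b)\le\mathcal{I}^*(a)$ for all $b\in\mathcal{E}$; (vi) $\mathcal{I}(\mathcal{I}(s))(u)=\mathcal{I}(s)(u)$ for all $s\in\mathcal{S}(\mathcal{E})$, and $\mathcal{I}^*(u)=a$.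
   Context: Let $V$ be a real vector space with zero $\theta$ and $K\subseteq V$ a positive cone ($\mathbb{R}^+K\subseteq K$, $K+K\subseteq K$, $K\cap(-K)=\{\theta\}$), ordered by $x\le y$ iff $y-x\in K$. For $u\in K$, $u\ne\theta$, $\mathcal{E}=[\theta,u]=\{x\in K:x\le u\}$; for $a,b\in\mathcal{E}$, $a\perp b$ means $a+b\le u$; the complement of $a$ is $a'=u-a$. $\mathcal{E}$ generates $V$ means $K=\mathbb{R}^+\mathcal{E}$ and $V=K-K$. A state is $s\colon\mathcal{E}\to[0,1]$ with $s(u)=1$ and $s(a+b)=s(a)+s(b)$ whenever $a\perp b$; $\mathcal{S}(\mathcal{E})$ is the set of all states, assumed order-determining: $a\le b$ iff $s(a)\le s(b)$ for all $s$. Affine = preserves finite convex combinations. Unrestricted: every affine $f\colon\mathcal{S}(\mathcal{E})\to[0,1]$ is of the form $f(s)=s(c)$ for some $c\in\mathcal{E}$. A substate is $\lambda s$, $\lambda\in[0,1]$, $s\in\mathcal{S}(\mathcal{E})$. An operation on $\mathcal{E}$ is an affine map $\mathcal{I}$ from $\mathcal{S}(\mathcal{E})$ to substates on $\mathcal{E}$; it is extended to substates by $\mathcal{I}(\lambda s)=\lambda\mathcal{I}(s)$. Its dual $\mathcal{I}^*\colon\mathcal{E}\to\mathcal{E}$ is the unique affine map with $s[\mathcal{I}^*(b)]=\mathcal{I}(s)(b)$ for all $s\in\mathcal{S}(\mathcal{E})$, $b\in\mathcal{E}$. When $\mathcal{I}^*(u)=a$ ($\mathcal{I}$ measures $a$),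 the sequential product relative to $\mathcal{I}$ is $a[\mathcal{I}]b=\mathcal{I}^*(b)$ for $b\in\mathcal{E}$. *)

From HB Require Import structures.
From mathcomp Require Import all_boot all_order all_algebra.
From mathcomp Require Import reals.
Set Implicit Arguments. Unset Strict Implicit. Unset Printing Implicit Defensive.
Import Order.TTheory GRing.Theory Num.Theory.
Local Open Scope ring_scope.

Section EffectAlgebra.
Context {R : realType} {V : lmodType R}.

Definition positive_cone (K : V -> Prop) : Prop :=
  [/\ (forall (r : R) x, 0 <= r -> K x -> K (r *: x)),
      (forall x y, K x -> K y -> K (x + y)) &
      (forall x, K x -> K (- x) -> x = 0)].

Definition cle (K : V -> Prop) (x y : V) : Prop := K (y - x).

Definition in_interval (K : V -> Prop) (u x : V) : Prop := K x /\ cle K x u.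

Definition Eff (K : V -> Prop) (u : V) : Type := {x : V | in_interval K u x}.

Definition perp (K : V -> Prop) (u : V) (a b : Eff K u) : Prop :=
  cle K (proj1_sig a + proj1_sig b) u.

Definition generates (K : V -> Prop) (u : V) : Prop :=
  (forall x, K x <-> exists (r : R) (e : V), 0 <= r /\ in_interval K u e /\ x = r *: e)
  /\ (forall v, exists x y, K x /\ K y /\ v = x - y).

Definition is_state (K : V -> Prop) (u : V) (s : Eff K u -> R) : Prop :=
  [/\ (forall e, 0 <= s e <= 1),
      (forall e, proj1_sig e = u -> s e = 1) &
      (forall a b c : Eff K u, proj1_sig c = proj1_sig a + proj1_sig b ->
          s c = s a + s b)].

Definition order_determining (K : V -> Prop) (u : V) : Prop :=
  forall a b : Eff K u,
    cle K (proj1_sig a) (proj1_sig b) <->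
    (forall s, is_state s -> s a <= s b).

Definition cvx (K : V -> Prop) (u : V) (l : R) (s t : Eff K u -> R) : Eff K u -> R :=
  fun e => l * s e + (1 - l) * t e.

(* affine real functions on the state space
   (binary convex combinations generate all finite ones) *)
Definition affine_on_states (K : V -> Prop) (u : V) (f : (Eff K u -> R) -> R) : Prop :=
  forall (l : R) s t, 0 <= l <= 1 -> is_state s -> is_state t ->
    f (cvx l s t) = l * f s + (1 - l) * f t.

Definition unrestricted (K : V -> Prop) (u : V) : Prop :=
  forall f : (Eff K u -> R) -> R, affine_on_states f ->
    (forall s, is_state s -> 0 <= f s <= 1) ->
    exists c : Eff K u, forall s, is_state s -> f s = s c.

Definition is_substate (K : V -> Prop) (u : V) (t : Eff K u -> R) : Prop :=
  exists (l : R) s, 0 <= l <= 1 /\ is_state s /\ t = (fun e => l * s e).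

(* an operation: affine map from states to substates, extended to
   substates by I(λ s) = λ I(s) *)
Definition is_operation (K : V -> Prop) (u : V) (I : (Eff K u -> R) -> (Eff K u -> R)) : Prop :=
  [/\ (forall s, is_state s -> is_substate (I s)),
      (forall (l : R) s t, 0 <= l <= 1 -> is_state s -> is_state t ->
          I (cvx l s t) = cvx l (I s) (I t)) &
      (forall (l : R) s, 0 <= l <= 1 -> is_state s ->
          I (fun e => l * s e) = (fun e => l * I s e))].

Definition is_dual (K : V -> Prop) (u : V) (I : (Eff K u -> R) -> (Eff K u -> R))
  (Istar : Eff K u -> Eff K u) : Prop :=
  forall s b, is_state s -> s (Istar b) = I s b.

(* sequential product relative to I (where I measures a): a[I]b = I*(b) *)
Definition seq_prod (K : V -> Prop) (u : V) (Istar : Eff K u -> Eff K u) (a b : Eff K u) : Eff K u :=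
  Istar b.

End EffectAlgebra.

(* Write a := I*(u) and a' := u - a.  Since states separate effects and each
   I(s) is a multiple of a state, I* is additive on orthogonal effects, hence
   monotone; so I*(b) <= a for all b and I*(a) + I*(a') = a.  Thus (i) holds
   iff I*(a') = 0, iff I* vanishes on every b <= a' (the b orthogonal to a),
   iff a <= I*(a).  For (vi), I(I(s))(u) = I(s)(I*(u)) = s(I*(a)) while
   I(s)(u) = s(a). *)
From HB Require Import structures.
From mathcomp Require Import all_boot all_order all_algebra.
From mathcomp Require Import reals.
From Stdlib Require Import ProofIrrelevance.
Import Order.TTheory GRing.Theory Num.Theory.
Local Open Scope ring_scope.

Set Implicit Arguments.
Unset Strict Implicit.

Section IntervalEffectAlgebra.
Variables (R : realType) (V : lmodType R) (K : V -> Prop) (u : V).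
Hypotheses (coneK : positive_cone K) (Ku : K u) (odK : order_determining K u).

Lemma cone0 : K 0.
Proof. by case: coneK => coneZ _ _; rewrite -(scale0r u); apply: coneZ. Qed.

Lemma coneD x y : K x -> K y -> K (x + y).
Proof. by case: coneK => _ coneD _; apply: coneD. Qed.

Lemma cle_anti x y : cle K x y -> cle K y x -> x = y.
Proof.
case: coneK => _ _ cone_pointed lexy leyx.
by apply/eqP; rewrite eq_sym -subr_eq0; apply/eqP/cone_pointed; rewrite ?opprB.
Qed.

Lemma eff_inj : injective (fun x : Eff K u => proj1_sig x).
Proof. by move=> [x px] [y py] /= exy; apply: subset_eq_compat. Qed.

Lemma eff_ge0 (x : Eff K u) : K (proj1_sig x).
Proof. exact: (proj1 (proj2_sig x)). Qed.

Lemma eff_le_top (x : Eff K u) : cle K (proj1_sig x) u.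
Proof. exact: (proj2 (proj2_sig x)). Qed.

Lemma state_inj (x y : Eff K u) :
  (forall s, is_state s -> s x = s y) -> x = y.
Proof. by move=> sxy; apply: eff_inj; apply: cle_anti; apply/odK => s Ss; rewrite sxy. Qed.

Lemma in_interval_top : in_interval K u u.
Proof. by split; rewrite // /cle subrr; exact: cone0. Qed.

Definition eff_top : Eff K u := exist _ u in_interval_top.

Lemma in_interval_sub (x y : Eff K u) :
  cle K (proj1_sig x) (proj1_sig y) ->
  in_interval K u (proj1_sig y - proj1_sig x).
Proof.
move=> lexy; split=> //; rewrite /cle opprB addrCA addrC.
by apply: coneD; [exact: eff_le_top | exact: eff_ge0].
Qed.

Lemma in_interval_compl (x : Eff K u) : in_interval K u (u - proj1_sig x).
Proof.
split; first exact: eff_le_top.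
by rewrite /cle opprB addrC subrK; exact: eff_ge0.
Qed.

Definition eff_compl (x : Eff K u) : Eff K u := exist _ _ (in_interval_compl x).

Lemma state_compl s x : is_state s -> s (eff_compl x) = 1 - s x.
Proof.
case=> _ s_top s_add.
by rewrite -(s_top eff_top) // (s_add (eff_compl x) x eff_top) ?addrK //= subrK.
Qed.

Lemma in_intervalD (x y : Eff K u) :
  (forall s, is_state s -> s x + s y <= 1) ->
  in_interval K u (proj1_sig x + proj1_sig y).
Proof.
move=> sxy_le1; split; first by apply: coneD; apply: eff_ge0.
have : cle K (proj1_sig x) (proj1_sig (eff_compl y)).
  by apply/odK => s Ss; rewrite state_compl // lerBrDr sxy_le1.
by rewrite /cle /= opprD addrA addrAC.
Qed.

Lemma perp_le_compl x y : perp x y -> cle K (proj1_sig y) (proj1_sig (eff_compl x)).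
Proof. by rewrite /perp /cle /= opprD addrA. Qed.

Lemma perp_compl x : perp x (eff_compl x).
Proof. by rewrite /perp /cle /= [_ + (u - _)]addrC subrK subrr; exact: cone0. Qed.

Variables (I : (Eff K u -> R) -> (Eff K u -> R)) (Istar : Eff K u -> Eff K u).
Hypotheses (opI : is_operation I) (dualI : is_dual I Istar).

Lemma operationD s (b1 b2 b : Eff K u) : is_state s ->
  proj1_sig b = proj1_sig b1 + proj1_sig b2 -> I s b = I s b1 + I s b2.
Proof.
move=> Ss b12; case: opI => subI _ _.
have [l [t [_ [[_ _ t_add] ->]]]] := subI s Ss.
by rewrite (t_add _ _ _ b12) mulrDr.
Qed.

Lemma operation_comp s b : is_state s -> I (I s) b = I s (Istar b).
Proof.
move=> Ss; case: opI => subI _ IZ.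
have [l [t [l01 [St ->]]]] := subI s Ss.
by rewrite IZ // dualI.
Qed.

Lemma dualD (b1 b2 b : Eff K u) :
  proj1_sig b = proj1_sig b1 + proj1_sig b2 ->
  proj1_sig (Istar b) = proj1_sig (Istar b1) + proj1_sig (Istar b2).
Proof.
move=> b12.
have sI_add s : is_state s -> s (Istar b) = s (Istar b1) + s (Istar b2).
  by move=> Ss; rewrite !dualI // (operationD Ss b12).
have sum_in : in_interval K u (proj1_sig (Istar b1) + proj1_sig (Istar b2)).
  apply: in_intervalD => s Ss; rewrite -sI_add //.
  by case: Ss => s01 _ _; case/andP: (s01 (Istar b)).
pose w : Eff K u := exist _ _ sum_in.
have -> : Istar b = w.
  apply: state_inj => s Ss; case: (Ss) => _ _ s_add.
  by rewrite sI_add // (s_add (Istar b1) (Istar b2) w).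
by [].
Qed.

Lemma dual_le (b c : Eff K u) :
  cle K (proj1_sig b) (proj1_sig c) ->
  cle K (proj1_sig (Istar b)) (proj1_sig (Istar c)).
Proof.
move=> lebc; pose d : Eff K u := exist _ _ (in_interval_sub lebc).
have c_bd : proj1_sig c = proj1_sig b + proj1_sig d by rewrite /= addrC subrK.
by rewrite /cle (dualD c_bd) addrC addKr; apply: eff_ge0.
Qed.

Lemma dual_le_top b : cle K (proj1_sig (Istar b)) (proj1_sig (Istar eff_top)).
Proof. exact/dual_le/eff_le_top. Qed.

Lemma dual_complD b :
  proj1_sig (Istar b) + proj1_sig (Istar (eff_compl b)) =
  proj1_sig (Istar eff_top).
Proof. by rewrite -(@dualD b (eff_compl b) eff_top) //= addrC subrK. Qed.

Lemma dual_eq0_le b c : cle K (proj1_sig b) (proj1_sig c) ->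
  proj1_sig (Istar c) = 0 -> proj1_sig (Istar b) = 0.
Proof.
move=> lebc Ic0; apply: cle_anti; first by rewrite -Ic0; exact: dual_le.
by rewrite /cle subr0; exact: eff_ge0.
Qed.

Local Notation a := (Istar eff_top).

Lemma repeatable_iff_dual_compl_eq0 :
  Istar a = a <-> proj1_sig (Istar (eff_compl a)) = 0.
Proof.
have complD := dual_complD a.
split=> [Ia | Ia'0]; last by apply: eff_inj; rewrite -complD Ia'0 addr0.
by move: complD; rewrite Ia -{2}[proj1_sig a]addr0 => /addrI.
Qed.

Lemma repeatable_iff_dual_le :
  Istar a = a <-> forall b, cle K (proj1_sig (Istar b)) (proj1_sig (Istar a)).
Proof.
split=> [Ia b | le_Ia]; first by rewrite Ia; exact: dual_le_top.
by apply: eff_inj; apply: cle_anti; [exact: dual_le_top | exact: le_Ia].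
Qed.

Lemma repeatable_iff_comp :
  Istar a = a <-> forall s, is_state s -> I (I s) eff_top = I s eff_top.
Proof.
have comp_top s : is_state s -> I (I s) eff_top = s (Istar a).
  by move=> Ss; rewrite operation_comp // (@dualI s a Ss).
have at_top s : is_state s -> I s eff_top = s a by move=> Ss; rewrite -dualI.
split=> [Ia s Ss | Icomp]; first by rewrite comp_top // at_top // Ia.
by apply: state_inj => s Ss; rewrite -comp_top // Icomp // at_top.
Qed.

End IntervalEffectAlgebra.

Theorem theorem3p3 (R : realType) (V : lmodType R) (K : V -> Prop) (u : V)
  (I : (Eff K u -> R) -> (Eff K u -> R)) (Istar : Eff K u -> Eff K u)
  (uE a : Eff K u) :
  positive_cone K -> K u -> u <> 0 ->
  generates K u -> order_determining K u -> unrestricted K u ->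
  is_operation I -> is_dual I Istar ->
  proj1_sig uE = u ->
  Istar uE = a ->
  let i := Istar a = a in
  let ii := seq_prod Istar a a = a in
  let iii := forall a' : Eff K u, proj1_sig a' = u - proj1_sig a ->
               proj1_sig (seq_prod Istar a a') = 0 in
  let iv := forall b : Eff K u, perp a b -> proj1_sig (seq_prod Istar a b) = 0 in
  let v := forall b : Eff K u, cle K (proj1_sig (Istar b)) (proj1_sig (Istar a)) in
  let vi := (forall s, is_state s -> I (I s) uE = I s uE) /\ Istar uE = a in
  [/\ i <-> ii, i <-> iii, i <-> iv, i <-> v & i <-> vi].
Proof.
move=> coneK Ku _ _ odK _ opI dualI uE_top Ha i ii iii iv v vi.
subst a; rewrite {}/i {}/ii {}/iii {}/iv {}/v {}/vi /seq_prod.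
have -> : uE = eff_top coneK Ku by exact: eff_inj.
set a := Istar (eff_top coneK Ku); pose a' := eff_compl a.
have i_a' := repeatable_iff_dual_compl_eq0 coneK Ku odK opI dualI.
have iii_a' : (forall b, proj1_sig b = u - proj1_sig a -> proj1_sig (Istar b) = 0)
    <-> proj1_sig (Istar a') = 0.
  by split=> [/(_ a' erefl) // | Ia'0 b /(eff_inj (x2 := a')) ->].
have iv_a' : (forall b, perp a b -> proj1_sig (Istar b) = 0)
    <-> proj1_sig (Istar a') = 0.
  split=> [Iperp | Ia'0 b /perp_le_compl le_b]; first exact/Iperp/(perp_compl coneK Ku).
  exact: (dual_eq0_le coneK Ku odK opI dualI le_b).
have [i_comp comp_i] := repeatable_iff_comp coneK Ku odK opI dualI.
split=> //.
- exact: iff_trans i_a' (iff_sym iii_a').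
- exact: iff_trans i_a' (iff_sym iv_a').
- exact: (repeatable_iff_dual_le coneK Ku odK opI dualI).
- by split=> [/i_comp Icomp | [/comp_i //]]; split.
Qed.
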